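(* Let $p\ge1$, $T>0$, $\delta_n=2^{-n}$, and let $S\in C^0([0,T],\mathbb R)$ with $S_0=0$ have a continuous local time $L^{\pi,p}$ of order $p$ along the sequence $\pi=(\pi_n)$ of Lebesgue partitions defined below, with $L^{\pi,p}_t(S,0)>0$ for $t\in(0,T]$. Then for every $t\in(0,T]$, as $n\to\infty$: (i) if $1\le p<2$, $\delta_n D^{\delta_n}_t(S)\to0$; (ii) if $p>2$, $\delta_nD^{\delta_n}_t(S)\to\infty$ and $D^{\delta_n}_t(S)\sim L^{\pi,p}_t(S,0)/\delta_n^{p-1}$; (iii) if $p=2$, $\delta_nD^{\delta_n}_t(S)\to L^{\pi,2}_t(S,0)$, i.e. $D^{\delta_n}_t(S)\sim L^{\pi,2}_t(S,0)/\delta_n$.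
   Context: Lebesgue partitions: $\pi_n=\{t^n_k\}$ with $t^n_0=0$, $t^n_{k+1}=\inf\{t\ge t^n_k: S_t\in\delta_n\mathbb Z\setminus\{S_{t^n_k}\}\}$. For $a,b\in\mathbb R$ write $[\![a,b))=[a,b)$ if $a\le b$ and $[b,a)$ if $a>b$. Set $L^{\pi_n,p}_t(S,x)=\sum_{t^n_j\in\pi_n}1_{[\![S_{t^n_j\wedge t},S_{t^n_{j+1}\wedge t}))}(x)\,|S_{t^n_{j+1}\wedge t}-x|^{p-1}$. $S$ has a continuous local time of order $p$ along $\pi$ if $L^{\pi_n,p}_t(S,x)$ converges, uniformly in $(t,x)\in[0,T]\times\mathbb R$, to a limit $L^{\pi,p}_t(S,x)$ and $(t,x)\mapsto L^{\pi,p}_t(S,x)$ is continuous. Number of $\delta$-excursions: with $\theta^+_0=\tau^+_0=0$, $\tau^+_i=\inf\{u>\theta^+_{i-1}:S_u=\delta\}$, $\theta^+_i=\inf\{u>\tau^+_i:S_u=0\}$, set $D^\delta_t(S)=\sum_{i\ge1}1_{\{\theta^+_i\le t\}}$. *)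

From HB Require Import structures.
From mathcomp Require Import all_boot all_order all_algebra.
From mathcomp Require Import all_classical all_reals all_analysis.
Set Implicit Arguments. Unset Strict Implicit. Unset Printing Implicit Defensive.
Import Order.TTheory GRing.Theory Num.Theory.
Import numFieldNormedType.Exports.
Local Open Scope classical_set_scope.
Local Open Scope ring_scope.

Section Defs.
Variable R : realType.
Implicit Types (S : R -> R) (T p d t x a : R).

Definition grid d : set R := [set y | exists z : int, y = z%:~R * d].

(* next Lebesgue partition point after a, capped at T:
   min(T, inf{u >= a : S u in dZ \ {S a}}) (restricted to [a,T]) *)
Definition next_lp S T d a : R :=
  inf [set u | a <= u <= T /\ ((grid d (S u) /\ S u <> S a) \/ u = T)].

Fixpoint lp S T d (k : nat) : R :=
  match k with 0%N => 0 | k'.+1 => next_lp S T d (lp S T d k') end.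

Definition in_oint (a b x : R) : bool :=
  if a <= b then (a <= x) && (x < b) else (b <= x) && (x < a).

Definition Lterm S T p d t x (j : nat) : R :=
  (in_oint (S (Num.min (lp S T d j) t)) (S (Num.min (lp S T d j.+1) t)) x)%:R
  * (`|S (Num.min (lp S T d j.+1) t) - x| `^ (p - 1)).

Definition Lpn S T p d t x : R := limn (fun n => \sum_(0 <= j < n) Lterm S T p d t x j).
(* the sum has finitely many nonzero terms for continuous S *)

Definition delta (n : nat) : R := 2 ^- n.

Definition has_cont_local_time S T p (L : R -> R -> R) : Prop :=
  (forall e : R, 0 < e -> exists N : nat, forall n : nat, (N <= n)%N ->
     forall t x, 0 <= t <= T -> `|Lpn S T p (delta n) t x - L t x| < e)
  /\ {within [set tx : R * R | 0 <= tx.1 <= T], continuous (fun tx => L tx.1 tx.2)}.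

(* first hitting time of level lvl strictly after a (within (a,T]);
   T + 1 (i.e. "never before T", standing for +oo) if there is none *)
Definition hit S T a lvl : R :=
  if pselect (exists u, a < u <= T /\ S u = lvl)
  then inf [set u | a < u <= T /\ S u = lvl] else T + 1.

Fixpoint exc S T d (i : nat) : R * R :=
  match i with
  | 0%N => (0, 0)
  | i'.+1 => let tau := hit S T (exc S T d i').2 d in (tau, hit S T tau 0)
  end.

Definition Dexc S T d t : R := limn (fun n => \sum_(0 <= i < n) (((exc S T d i.+1).2 <= t)%R%:R : R)).

End Defs.

From HB Require Import structures.
From mathcomp Require Import all_boot all_order all_algebra.
From mathcomp Require Import all_classical all_reals all_analysis.
From mathcomp Require Import ring lra.
Import Order.TTheory GRing.Theory Num.Theory.
Import numFieldNormedType.Exports.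
Local Open Scope classical_set_scope.
Local Open Scope ring_scope.
Set Implicit Arguments. Unset Strict Implicit. Unset Printing Implicit Defensive.

(* Fix a grid dZ and write t_k for the Lebesgue partition of S along it and
   theta_i for the ends of the successive d-excursions 0 -> d -> 0.  Both
   sequences are finite before T by continuity of S, and the heart of the proof
   is a sandwich between the discrete local time at level 0 and the number
   D^d_t of excursions completed by time t:
       D^d_t d^(p-1) <= L^(pi,p)_t(S, 0) <= (D^d_t + 2) d^(p-1)     (p > 1),
   the lower bound holding for every p.  Indeed a term of L^(pi,p)_t(S, 0) is
   d^(p-1) for an "up-step" (a partition step from 0 to d completed by t), at
   most d^(p-1) for the single step straddling t, and 0 otherwise; and every
   completed excursion contains exactly one up-step while every up-step lies in
   exactly one excursion started before t.  Taking d = delta_n = 2^-n, the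
   discrete local times converge to L_t(S, 0) > 0, and the three regimes follow
   from delta_n D = delta_n^(2-p) (D delta_n^(p-1)). *)

Lemma leq_sum_nat n (F G : nat -> nat) :
  (forall i, (i < n)%N -> (F i <= G i)%N) ->
  (\sum_(0 <= i < n) F i <= \sum_(0 <= i < n) G i)%N.
Proof.
move=> h; rewrite big_nat_cond [X in (_ <= X)%N]big_nat_cond.
by apply: leq_sum => i /andP[/andP[_ hi] _]; apply: h.
Qed.

Lemma sum_le1 n (P : nat -> bool) :
  (forall i i', (i < n)%N -> (i' < n)%N -> P i -> P i' -> i = i') ->
  (\sum_(0 <= i < n) (P i : nat) <= 1)%N.
Proof.
elim: n => [|n IH] h; first by rewrite big_geq.
rewrite big_nat_recr //=; case hn: (P n); last first.
  by rewrite addn0 IH // => i i' hi hi'; apply: h; exact: ltnW.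
rewrite (_ : \sum_(0 <= i < n) (P i : nat) = 0%N) //.
rewrite big_nat_cond big1 // => i /andP[/andP[_ hi] _]; case hi': (P i) => //.
by have := h i n (ltnW hi) (ltnSn n) hi' hn => e; move: hi; rewrite e ltnn.
Qed.

Lemma sum_ge1 n (P : nat -> bool) i : (i < n)%N -> P i ->
  (1 <= \sum_(0 <= i < n) (P i : nat))%N.
Proof.
move=> hi hP; elim: n hi => [//|n IH]; rewrite ltnS leq_eqVlt big_nat_recr //=.
by case/orP=> [/eqP <-|/IH h]; [rewrite hP addn1 | apply: leq_trans h (leq_addr _ _)].
Qed.

Lemma sum_eq0 n (P : nat -> bool) :
  (forall i, (i < n)%N -> ~~ P i) -> \sum_(0 <= i < n) (P i : nat) = 0%N.
Proof.
move=> h; rewrite big_nat_cond big1 // => i /andP[/andP[_ hi] _].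
by rewrite (negbTE (h i hi)).
Qed.

Lemma dIVT (P : nat -> bool) a b : (a <= b)%N -> P a -> ~~ P b ->
  exists k, [/\ (a <= k)%N, (k < b)%N, P k & ~~ P k.+1].
Proof.
elim: b => [|b IH] hab ha hb.
  by move: hab; rewrite leqn0 => /eqP e; move: hb; rewrite -e ha.
have hab' : (a <= b)%N.
  by move: hab; rewrite leq_eqVlt => /orP[/eqP e|//]; move: hb; rewrite -e ha.
case hPb: (P b); first by exists b.
by have [k [k1 k2 k3 k4]] := IH hab' ha (negbT hPb); exists k; split => //; apply: ltnW.
Qed.

Section Grid.
Variables (R : realType) (d : R).
Hypothesis d_gt0 : 0 < d.

Lemma grid0 : grid d 0.
Proof. by exists 0; rewrite mul0r. Qed.

Lemma grid_d : grid d d.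
Proof. by exists 1; rewrite mul1r. Qed.

Lemma gridD (g : R) : grid d g -> grid d (g + d) /\ grid d (g - d).
Proof.
move=> [z ->]; split; [exists (z + 1) | exists (z - 1)].
  by rewrite intrD mulrDl mul1r.
by rewrite intrB mulrBl mul1r.
Qed.

Lemma grid_lt (x y : R) : grid d x -> grid d y -> x < y -> x + d <= y.
Proof.
move=> [z ->] [z' ->]; rewrite (ltr_pM2r d_gt0) ltr_int -lezD1 => hz.
have : (z + 1)%:~R * d <= z'%:~R * d :> R by rewrite (ler_pM2r d_gt0) ler_int.
by rewrite intrD mulrDl mul1r.
Qed.

Lemma grid_close (x y : R) : grid d x -> grid d y -> `|x - y| < d -> x = y.
Proof.
move=> gx gy; rewrite ltr_distlC => /andP[h1 h2]; have [xy|xy|//] := ltgtP x y.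
- by have := grid_lt gx gy xy; lra.
- by have := grid_lt gy gx xy; lra.
Qed.

Lemma grid_cross0 (g x : R) : grid d g -> `|x - g| <= d ->
  (g <= 0 < x -> g = 0 /\ x <= d) /\ (x <= 0 < g -> x = 0).
Proof.
move=> gg hxg; split=> /andP[h1 h2].
  have g0 : g = 0.
    apply/le_anti; rewrite h1 leNgt; apply/negP => /(grid_lt gg grid0).
    by move: hxg; rewrite ler_distlC => hxg h; lra.
  by move: hxg; rewrite g0 subr0 ger0_norm ?(ltW h2).
have := grid_lt grid0 gg h2; move: hxg; rewrite ler_distlC => hxg h; lra.
Qed.

End Grid.

Section ContinuousPath.
Variables (R : realType) (S : R -> R) (T : R).
Hypothesis S_cont : {within `[0, T], continuous S}.

Lemma cont_dist x : 0 <= x <= T -> forall e, 0 < e ->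
  exists2 eta, 0 < eta & forall y, 0 <= y <= T -> `|x - y| < eta -> `|S x - S y| < e.
Proof.
move=> hx e he.
have Ax : `[0, T]%classic x by rewrite /= in_itv.
move/subspace_continuousP: S_cont => /(_ x Ax) /cvgrPdist_lt /(_ e he).
rewrite near_withinE => /nbhs_ballP [eta heta H].
by exists eta => // y hy hxy; apply: H; rewrite /ball //= in_itv.
Qed.

Lemma ivt_between a b v : 0 <= a -> a <= b -> b <= T ->
  Num.min (S a) (S b) <= v <= Num.max (S a) (S b) ->
  exists2 c, a <= c <= b & S c = v.
Proof.
move=> h0 hab hbT hv.
have Sab : {within `[a, b], continuous S}.
  apply: continuous_subspaceW S_cont => y /=; rewrite !in_itv /= => /andP[h1 h2].
  by rewrite (le_trans h0 h1) (le_trans h2 hbT).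
have [c hc1 hc2] := IVT hab Sab hv.
by exists c => //; move: hc1; rewrite in_itv.
Qed.

Lemma cross_level a b e : 0 <= a -> a <= b -> b <= T -> 0 <= e ->
  e < `|S b - S a| -> exists c, [/\ a <= c, c < b & `|S c - S a| = e].
Proof.
move=> h0 hab hbT e0 hlt.
suff [c /andP[c1 c2] Sc] : exists2 c, a <= c <= b & `|S c - S a| = e.
  exists c; split; rewrite // lt_neqAle c2 andbT.
  by apply/eqP => cb; move: hlt; rewrite -cb Sc ltxx.
have [Sab|Sba] := leP (S a) (S b).
  move: hlt; rewrite ger0_norm ?subr_ge0 // => hlt.
  have [c hc Sc] : exists2 c, a <= c <= b & S c = S a + e.
    by apply: ivt_between => //; rewrite ge_min le_max; apply/andP; split; lra.
  by exists c => //; rewrite Sc addrC addKr ger0_norm.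
move: hlt; rewrite ler0_norm ?subr_le0 ?ltW // => hlt.
have [c hc Sc] : exists2 c, a <= c <= b & S c = S a - e.
  by apply: ivt_between => //; rewrite ge_min le_max; apply/andP; split; lra.
by exists c => //; rewrite Sc addrC addKr normrN ger0_norm.
Qed.

Lemma right_limit_value u v : 0 <= u <= T ->
  (forall e, 0 < e -> exists w, [/\ u <= w, w < u + e, w <= T & S w = v]) -> S u = v.
Proof.
move=> hu H; apply/eqP; rewrite -subr_eq0 -normr_eq0; apply/eqP/le_anti.
rewrite normr_ge0 andbT; apply/ler_addgt0Pr => e he; rewrite add0r.
have [eta heta Heta] := cont_dist hu he.
have [w [h1 h2 h3 <-]] := H eta heta.
rewrite ltW // Heta //; first by case/andP: hu => hu0 _; rewrite (le_trans hu0 h1) h3.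
by rewrite distrC ger0_norm ?subr_ge0 // ltrBlDl.
Qed.

(* If grid values of S with property P accumulate at u from the right, then
   S u is itself such a value: grid values near S u are all equal. *)
Lemma right_limit_grid d (P : R -> Prop) u : 0 < d -> 0 <= u <= T ->
  (forall e, 0 < e -> exists w, [/\ u <= w, w < u + e, w <= T & grid d (S w) /\ P (S w)]) ->
  grid d (S u) /\ P (S u).
Proof.
move=> hd hu H; have hd2 : 0 < d / 2 by rewrite divr_gt0.
have [eta heta Heta] := cont_dist hu hd2.
have close w : u <= w -> w < u + eta -> w <= T -> `|S u - S w| < d / 2.
  move=> h1 h2 h3; apply: Heta; first by case/andP: hu => h0 _; rewrite (le_trans h0 h1).
  by rewrite distrC ger0_norm ?subr_ge0 // ltrBlDl.
have [w0 [w01 w02 w0T [g0 P0]]] := H eta heta.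
suff -> : S u = S w0 by [].
apply: right_limit_value => // e he.
have hm : 0 < Num.min e eta by rewrite lt_min he heta.
have [w [w1 w2 wT [gw _]]] := H _ hm.
have w2' : w < u + eta by apply: lt_le_trans w2 _; rewrite lerD2l ge_min lexx orbT.
exists w; split=> //; first by apply: lt_le_trans w2 _; rewrite lerD2l ge_min lexx.
apply: (grid_close hd gw g0).
rewrite (_ : S w - S w0 = (S u - S w0) - (S u - S w)); last by ring.
apply: le_lt_trans (ler_normB _ _) _.
by rewrite (splitr d) ltrD // close.
Qed.

(* S cannot oscillate by d infinitely often along a nondecreasing sequence of
   times: the times converge and S is continuous at the limit. *)
Lemma no_infinite_oscillation d (x : nat -> R) : 0 < d ->
  (forall k, 0 <= x k <= T) -> (forall k, x k <= x k.+1) ->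
  ~ (forall k, exists y, [/\ x k <= y, y <= x k.+1 & d <= `|S y - S (x k)|]).
Proof.
move=> hd hx hmono hosc.
have x_sup : has_sup (range x).
  by split; [exists (x 0%N), 0%N | exists T => _ [k _ <-]; case/andP: (hx k)].
set l := sup (range x).
have ub j : x j <= l by apply: sup_upper_bound => //; exists j.
have hl : 0 <= l <= T.
  rewrite (le_trans _ (ub 0%N)) ?(proj1 (andP (hx 0%N))) //=.
  by apply: ge_sup; [exists (x 0%N), 0%N | move=> _ [k _ <-]; case/andP: (hx k)].
have hd2 : 0 < d / 2 by rewrite divr_gt0.
have [eta heta Heta] := cont_dist hl hd2.
have [_ [k _ <-] hk] := sup_adherent heta x_sup.
have [y [y1 y2 y3]] := hosc k.
have near_l z : x k <= z <= l -> `|S l - S z| < d / 2.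
  move=> /andP[z1 z2]; apply: Heta.
    by case/andP: (hx k) => h0 _; rewrite (le_trans h0 z1) (le_trans z2 (proj2 (andP hl))).
  by rewrite ger0_norm ?subr_ge0 // ltrBlDl -ltrBlDr (lt_le_trans hk z1).
have e1 := near_l y; have e2 := near_l (x k).
have : `|S y - S (x k)| < d.
  rewrite (_ : S y - S (x k) = (S l - S (x k)) - (S l - S y)); last by ring.
  apply: le_lt_trans (ler_normB _ _) _.
  by rewrite (splitr d) ltrD ?e1 ?e2 ?lexx ?ub ?y1 ?(le_trans y2 (ub _)).
by rewrite ltNge y3.
Qed.

End ContinuousPath.

Section LebesguePartition.
Variables (R : realType) (S : R -> R) (T d : R).
Hypothesis S_cont : {within `[0, T], continuous S}.
Hypotheses (T_gt0 : 0 < T) (d_gt0 : 0 < d) (S0 : S 0 = 0).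

Local Notation next := (next_lp S T d).
Local Notation lpk := (lp S T d).

Let candidates a := [set u | a <= u <= T /\ ((grid d (S u) /\ S u <> S a) \/ u = T)].

Let candidates_inf a : a <= T -> has_inf (candidates a).
Proof.
move=> haT; split; first by exists T; split; [rewrite haT lexx | right].
by exists a => u [/andP[]].
Qed.

Lemma next_range a : a <= T -> a <= next a <= T.
Proof.
move=> haT; apply/andP; split.
  by apply: lb_le_inf; [case: (candidates_inf haT) | move=> u [/andP[]]].
by apply: ge_inf; [case: (candidates_inf haT) | split; [rewrite haT lexx | right]].
Qed.

Lemma next_le a u : a <= u <= T -> grid d (S u) -> S u <> S a -> next a <= u.
Proof.
move=> hu hg hne; apply: ge_inf; last by split => //; left.
by case: (candidates_inf (le_trans (proj1 (andP hu)) (proj2 (andP hu)))).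
Qed.

Lemma next_attain a : 0 <= a -> a <= T -> next a < T ->
  grid d (S (next a)) /\ S (next a) <> S a.
Proof.
move=> h0 haT hlt; have hinf := candidates_inf haT.
have /andP[a_le_next next_le_T] := next_range haT.
apply: (right_limit_grid S_cont (P := fun y => y <> S a) d_gt0).
  by rewrite (le_trans h0 a_le_next) next_le_T.
move=> e he; have hm : 0 < Num.min e (T - next a) by rewrite lt_min he subr_gt0 hlt.
have [v Ev lt_v] := inf_adherent hm hinf.
have le_v : next a <= v by apply: ge_inf => //; case: hinf.
case: Ev => /andP[_ vT] hv.
have v_lt : v < next a + e by apply: lt_le_trans lt_v _; rewrite lerD2l ge_min lexx.
exists v; split => //; case: hv => // v_eq_T.
by move: lt_v; rewrite v_eq_T -ltrBlDl ltNge ge_min lexx orbT.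
Qed.

Lemma lp_range k : 0 <= lpk k <= T.
Proof.
elim: k => [|k /andP[h0 hT]]; first by rewrite /= lexx ltW.
by have /andP[h1 ->] := next_range hT; rewrite (le_trans h0 h1).
Qed.

Lemma lp_le1 k : lpk k <= lpk k.+1.
Proof. by case/andP: (lp_range k) => _ /next_range /andP[]. Qed.

Lemma lp_mono k k' : (k <= k')%N -> lpk k <= lpk k'.
Proof.
move=> hk; rewrite -(subnKC hk); elim: (k' - k)%N => [|m IH]; first by rewrite addn0.
by rewrite addnS; exact: le_trans IH (lp_le1 _).
Qed.

Lemma lp_after N k : lpk N = T -> (N <= k)%N -> lpk k = T.
Proof.
move=> hN /lp_mono; rewrite hN => h.
by apply/le_anti; rewrite h (proj2 (andP (lp_range k))).
Qed.

Lemma lp_index_lt N k : lpk N = T -> lpk k < T -> (k < N)%N.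
Proof. by move=> hN; apply: contraTltn => /(lp_after hN) ->; rewrite ltxx. Qed.

Lemma lp_grid k : lpk k < T -> grid d (S (lpk k)).
Proof.
case: k => [|k] hk; first by rewrite /= S0; exact: grid0.
by case/andP: (lp_range k) => h0 h1; case: (next_attain h0 h1 hk).
Qed.

Lemma lp_neq k : lpk k.+1 < T -> S (lpk k.+1) <> S (lpk k).
Proof. by move=> hk; case/andP: (lp_range k) => h0 h1; case: (next_attain h0 h1 hk). Qed.

Lemma lp_stay k u : lpk k < T -> lpk k <= u -> u <= lpk k.+1 ->
  `|S u - S (lpk k)| <= d.
Proof.
move=> hkT h1 h2; rewrite leNgt; apply/negP => far.
have uT : u <= T by apply: le_trans h2 (proj2 (andP (lp_range _))).
have h0 : 0 <= lpk k by case/andP: (lp_range k).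
have [c [c1 c2 Sc]] := cross_level S_cont h0 h1 uT (ltW d_gt0) far.
have [gc nec] : grid d (S c) /\ S c <> S (lpk k).
  have [gp gm] := gridD (lp_grid hkT).
  have [up|down] := leP 0 (S c - S (lpk k)).
    move: Sc; rewrite ger0_norm // => Sc; have -> : S c = S (lpk k) + d by lra.
    by split=> // e; move: d_gt0; lra.
  move: Sc; rewrite ltr0_norm // => Sc; have -> : S c = S (lpk k) - d by lra.
  by split=> // e; move: d_gt0; lra.
have : lpk k.+1 <= c by apply: next_le; rewrite // c1 (le_trans (ltW c2) uT).
by move=> /le_lt_trans /(_ (lt_le_trans c2 h2)); rewrite ltxx.
Qed.

Lemma lp_step k : lpk k.+1 < T -> `|S (lpk k.+1) - S (lpk k)| = d.
Proof.
move=> hk1; have hk : lpk k < T by apply: le_lt_trans (lp_le1 k) hk1.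
apply/le_anti; rewrite lp_stay ?lp_le1 //= leNgt; apply/negP => hh.
exact: (lp_neq hk1) (grid_close d_gt0 (lp_grid hk1) (lp_grid hk) hh).
Qed.

Lemma lp_fin : exists N, lpk N = T.
Proof.
apply: contrapT => hno.
have hlt k : lpk k < T.
  rewrite lt_neqAle (proj2 (andP (lp_range k))) andbT.
  by apply/eqP => h; apply: hno; exists k.
apply: (no_infinite_oscillation S_cont d_gt0 lp_range lp_le1) => k.
by exists (lpk k.+1); split; rewrite ?lp_le1 ?lp_step.
Qed.

Lemma lp_index_unique k m u : lpk k <= u < lpk k.+1 -> lpk m <= u < lpk m.+1 -> k = m.
Proof.
have cross a b : (a < b)%N -> lpk a <= u < lpk a.+1 -> ~ lpk b <= u.
  move=> /lp_mono hab /andP[_ ua] bu.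
  by move: (lt_le_trans (le_lt_trans bu ua) hab); rewrite ltxx.
move=> hk hm; case: (ltngtP k m) => // [km|mk].
- by case: (cross _ _ km hk); case/andP: hm.
- by case: (cross _ _ mk hm); case/andP: hk.
Qed.

Lemma lp_last_before u : 0 <= u < T -> grid d (S u) ->
  exists k, [/\ lpk k <= u, u < lpk k.+1 & S (lpk k) = S u].
Proof.
move=> /andP[u0 uT] gu; have [N hN] := lp_fin.
have hnN : ~~ (lpk N <= u) by rewrite hN -ltNge.
have [k [_ _ k1 k2]] := @dIVT (fun k => lpk k <= u) 0 N (leq0n _) u0 hnN.
rewrite /= -ltNge in k2; exists k; split=> //.
apply: contrapT => hne; have : lpk k.+1 <= u.
  by apply: next_le => //; [rewrite k1 (ltW uT) | move=> e; apply: hne; rewrite e].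
by move=> /le_lt_trans /(_ k2); rewrite ltxx.
Qed.

End LebesguePartition.

Section ExcursionTimes.
Variables (R : realType) (S : R -> R) (T d : R).
Hypothesis S_cont : {within `[0, T], continuous S}.
Hypotheses (T_gt0 : 0 < T) (d_gt0 : 0 < d) (S0 : S 0 = 0).

Local Notation hitS := (hit S T).
Local Notation th i := (exc S T d i).2.
Local Notation tau i := (hit S T (exc S T d i).2 d).

Let hit_lbound a lvl : has_lbound [set u | a < u <= T /\ S u = lvl].
Proof. by exists a => v [/andP[/ltW]]. Qed.

Lemma hit_cases a lvl : hitS a lvl <= T \/ hitS a lvl = T + 1.
Proof.
rewrite /hit; destruct (pselect _) as [hex|hn]; last by right.
have [u [/andP[h1 h2] h3]] := hex; left; apply: (le_trans _ h2).
apply: ge_inf; [exact: hit_lbound | by split => //; rewrite h1 h2].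
Qed.

Lemma hit_le a lvl u : a < u -> u <= T -> S u = lvl -> hitS a lvl <= u.
Proof.
move=> h1 h2 h3; rewrite /hit; destruct (pselect _) as [hex|hn].
  by apply: ge_inf; [exact: hit_lbound | by split => //; rewrite h1 h2].
by case: hn; exists u; rewrite h1 h2.
Qed.

Lemma hit_after_T a lvl : T <= a -> hitS a lvl = T + 1.
Proof.
move=> ha; rewrite /hit; destruct (pselect _) as [hex|hn] => //.
have [u [/andP[h1 h2] _]] := hex.
by move: (lt_le_trans h1 h2); rewrite ltNge ha.
Qed.

Lemma hit_attain a lvl : 0 <= a -> S a <> lvl -> hitS a lvl <= T ->
  a < hitS a lvl /\ S (hitS a lvl) = lvl.
Proof.
move=> h0 hne; rewrite /hit; destruct (pselect _) as [hex|hn] => /= hle; last first.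
  by exfalso; move: hle; lra.
have hinf : has_inf [set u | a < u <= T /\ S u = lvl].
  by split; [case: hex => u hu; exists u | exact: hit_lbound].
have ha : a <= inf [set u | a < u <= T /\ S u = lvl].
  by apply: lb_le_inf; [case: hinf | move=> v [/andP[/ltW]]].
have hS : S (inf [set u | a < u <= T /\ S u = lvl]) = lvl.
  apply: (right_limit_value S_cont); first by rewrite (le_trans h0 ha) hle.
  move=> e he; have [v [/andP[v1 v2] v3] hv] := inf_adherent he hinf.
  exists v; split => //; apply: ge_inf; [exact: hit_lbound | by split => //; rewrite v1 v2].
by split => //; rewrite lt_neqAle ha andbT; apply/eqP => hh; apply: hne; rewrite hh.
Qed.

Lemma thS i : th i.+1 = hitS (tau i) 0. Proof. by []. Qed.

Lemma th_cases i : th i = T + 1 \/ (0 <= th i <= T /\ S (th i) = 0).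
Proof.
elim: i => [|i IH]; first by right; rewrite /= S0 lexx ltW.
rewrite thS; case: (hit_cases (tau i) 0) => [hle|]; last by left.
have never a lvl : T <= a -> ~ hitS a lvl <= T by move=> /hit_after_T ->; lra.
case: IH => [hi|[/andP[h0 _] h2]].
  by exfalso; apply: (never (tau i) 0) => //; rewrite hi hit_after_T ?lerDl; lra.
have hne : S (th i) <> d by rewrite h2 => hh; move: d_gt0; rewrite hh ltxx.
case: (hit_cases (th i) d) => [ht|ht]; last first.
  by exfalso; apply: (never (tau i) 0) => //; rewrite ht; lra.
have [ta1 ta2] := hit_attain h0 hne ht.
have hne2 : S (tau i) <> 0 by rewrite ta2 => hh; move: d_gt0; rewrite hh ltxx.
have h0' : 0 <= tau i by apply: le_trans h0 (ltW ta1).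
have [tb1 tb2] := hit_attain h0' hne2 hle.
by right; rewrite tb2 hle (le_trans h0' (ltW tb1)).
Qed.

Lemma th_ub i : th i <= T + 1.
Proof. by case: (th_cases i) => [->|[/andP[_ ?] _]]; [rewrite lexx | rewrite ler_wpDr]. Qed.

Lemma th_zero i : th i <= T -> 0 <= th i /\ S (th i) = 0.
Proof. by case: (th_cases i) => [->|[/andP[h0 _] ->]] //; lra. Qed.

Lemma th_step i : th i.+1 <= T ->
  [/\ 0 <= th i, th i < tau i, tau i < th i.+1 & S (tau i) = d] /\
  [/\ S (th i) = 0, S (th i.+1) = 0 & tau i <= T].
Proof.
move=> hle.
have taT : tau i < T.
  by rewrite ltNge; apply/negP => /hit_after_T hh; move: hle; rewrite thS hh; lra.
have thT : th i < T.
  by rewrite ltNge; apply/negP => /hit_after_T hh; move: taT; rewrite hh; lra.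
have [h0 h2] := th_zero (ltW thT).
have hne : S (th i) <> d by rewrite h2 => hh; move: d_gt0; rewrite hh ltxx.
have [ta1 ta2] := hit_attain h0 hne (ltW taT).
have hne2 : S (tau i) <> 0 by rewrite ta2 => hh; move: d_gt0; rewrite hh ltxx.
have [tb1 tb2] := hit_attain (le_trans h0 (ltW ta1)) hne2 hle.
by split; split => //; apply: ltW.
Qed.

Lemma th_le1 i : th i <= th i.+1.
Proof.
case: (hit_cases (tau i) 0) => hh; last first.
  by rewrite thS hh th_ub.
by case: (th_step hh) => -[_ h1 h2 _] _; rewrite ltW // (lt_trans h1 h2).
Qed.

Lemma th_mono i i' : (i <= i')%N -> th i <= th i'.
Proof.
move=> hk; rewrite -(subnKC hk); elim: (i' - i)%N => [|m IH]; first by rewrite addn0.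
by rewrite addnS; exact: le_trans IH (th_le1 _).
Qed.

Lemma th_fin : exists M, th M = T + 1.
Proof.
apply: contrapT => hno.
have hle i : th i <= T.
  by case: (th_cases i) => [hi|[/andP[_ ->] _] //]; exfalso; apply: hno; exists i.
have hrange i : 0 <= th i <= T.
  by case: (th_cases i) => [hi|[-> _]] //; exfalso; apply: hno; exists i.
apply: (no_infinite_oscillation S_cont d_gt0 hrange th_le1) => i.
exists (tau i); case: (th_step (hle i.+1)) => -[h0 h1 h2 h3] [h4 h5 h6].
by split; [exact: ltW | exact: ltW | rewrite h3 h4 subr0 ger0_norm ?lexx // ltW].
Qed.

Lemma th_after M i : th M = T + 1 -> (M <= i)%N -> th i = T + 1.
Proof.
by move=> hM /th_mono; rewrite hM => h; apply/le_anti; rewrite h th_ub.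
Qed.

End ExcursionTimes.

(* Every completed excursion contains exactly
   one up-step, and every up-step lies in exactly one excursion, which has
   started before t; hence the two counts differ by at most one. *)
Section UpStepsAndExcursions.
Variables (R : realType) (S : R -> R) (T d t : R).
Hypothesis S_cont : {within `[0, T], continuous S}.
Hypotheses (T_gt0 : 0 < T) (d_gt0 : 0 < d) (S0 : S 0 = 0) (t_le_T : t <= T).

Local Notation lpk := (lp S T d).
Local Notation th i := (exc S T d i).2.
Local Notation tau i := (hit S T (exc S T d i).2 d).

Definition upstep j : bool :=
  (lpk j.+1 <= t) && (S (lpk j) == 0) && (S (lpk j.+1) == d).

Definition upstep_in j i : bool := upstep j && (th i < lpk j.+1) && (lpk j.+1 <= th i.+1).

Lemma upstep_in_unique_excursion j i i' : upstep_in j i -> upstep_in j i' -> i = i'.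
Proof.
move=> /andP[/andP[_ a1] a2] /andP[/andP[_ b1] b2].
have sep a b : (a < b)%N -> lpk j.+1 <= th a.+1 -> th b < lpk j.+1 -> False.
  move=> /(th_mono S_cont T_gt0 d_gt0 S0) hab h1 h2.
  by move: (le_lt_trans (le_trans h1 hab) h2); rewrite ltxx.
by case: (ltngtP i i') => // [/sep|/sep]; [move/(_ a2 b1) | move/(_ b2 a1)].
Qed.

(* Two up-steps j < j' cannot lie in the same excursion: S reaches d at
   t_(j+1) and must return to 0 before t_(j'). *)
Lemma excursion_unique_upstep i j j' : upstep_in j i -> upstep_in j' i -> j = j'.
Proof.
wlog hjj : j j' / (j < j')%N.
  by move=> H h1 h2; case: (ltngtP j j') => [/H|/H|//]; [apply | move=> e; apply/esym/e].
move=> /andP[/andP[/andP[/andP[c1 /eqP c2] /eqP c3] q1] q2].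
move=> /andP[/andP[/andP[/andP[c1' /eqP c2'] /eqP c3'] q1'] q2'].
have hlT : lpk j.+1 <= T by apply: le_trans c1 t_le_T.
have thT : th i <= T by apply: ltW; apply: lt_le_trans q1 hlT.
have [h0 hS] := th_zero S_cont T_gt0 d_gt0 S0 thT.
have htau : tau i <= lpk j.+1 by apply: hit_le.
have hne : S (th i) <> d by rewrite hS => hh; move: d_gt0; rewrite hh ltxx.
have [_ ta2] := hit_attain S_cont h0 hne (le_trans htau hlT).
have hmono : lpk j.+1 <= lpk j' by apply: (lp_mono S d T_gt0).
have hlt : tau i < lpk j'.
  rewrite lt_neqAle (le_trans htau hmono) andbT; apply/eqP => e.
  by move: ta2; rewrite e c2' => hh; move: d_gt0; rewrite -hh ltxx.
have h1 := hit_le hlt (proj2 (andP (lp_range S d T_gt0 j'))) c2'.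
have h2 : lpk j' < lpk j'.+1.
  rewrite lt_neqAle (lp_le1 S d T_gt0) andbT; apply/eqP => e.
  by move: c3'; rewrite -e c2' => hh; move: d_gt0; rewrite hh ltxx.
by move: (lt_le_trans (le_lt_trans h1 h2) q2'); rewrite ltxx.
Qed.

Lemma upstep_in_excursion j M : th M = T + 1 -> upstep j -> exists i, (i < M)%N /\ upstep_in j i.
Proof.
move=> hM hup; move: (hup) => /andP[/andP[c1 /eqP c2] /eqP c3].
have hpos : 0 < lpk j.+1.
  case/andP: (lp_range S d T_gt0 j.+1) => h0 _; rewrite lt_neqAle h0 andbT.
  by apply/eqP => e; move: c3; rewrite -e S0 => hh; move: d_gt0; rewrite hh ltxx.
have hnM : ~~ (th M < lpk j.+1) by rewrite hM -leNgt; have := le_trans c1 t_le_T; lra.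
have [i [_ i2 i3 i4]] := @dIVT (fun i => th i < lpk j.+1) 0 M (leq0n _) hpos hnM.
by exists i; split => //; rewrite /upstep_in hup i3 /= leNgt.
Qed.

(* Every excursion completed by time t contains an up-step: take the last
   partition points before theta_i (at level 0) and before tau_i (at level d),
   and the last step between them leaving the level 0. *)
Lemma excursion_has_upstep i N : lpk N = T -> th i.+1 <= t ->
  exists j, (j < N)%N /\ upstep_in j i.
Proof.
move=> hN hti.
have [[h0 h1 h2 h3] [h4 _ _]] := th_step S_cont T_gt0 d_gt0 S0 (le_trans hti t_le_T).
have tauT : tau i < T by apply: lt_le_trans h2 (le_trans hti t_le_T).
have thT : th i < T by apply: lt_trans h1 tauT.
have [k [k1 k2 Sk]] := lp_last_before S_cont T_gt0 d_gt0 S0 (u := th i)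
  (ltac:(by rewrite h0 thT)) (ltac:(by rewrite h4; exact: grid0)).
have [m [m1 m2 Sm]] := lp_last_before S_cont T_gt0 d_gt0 S0 (u := tau i)
  (ltac:(by rewrite (le_trans h0 (ltW h1)) tauT)) (ltac:(by rewrite h3; exact: grid_d)).
rewrite h4 in Sk; rewrite h3 in Sm.
have hkm : (k < m)%N.
  rewrite ltnNge; apply/negP => /(lp_mono S d T_gt0) mk.
  have km : k = m.
    apply: (@lp_index_unique R S T d T_gt0 k m (th i)); first by rewrite k1 k2.
    by rewrite (le_trans mk k1) (lt_trans h1 m2).
  by move: Sm; rewrite -km Sk => d0; move: d_gt0; rewrite d0 ltxx.
have [j [j1 j2 j3 j4]] := @dIVT (fun j => S (lpk j) <= 0) k m (ltnW hkm)
  (ltac:(by rewrite /= Sk)) (ltac:(by rewrite /= Sm -ltNge)).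
rewrite /= -ltNge in j4.
have hjm : lpk j.+1 <= lpk m by apply: (lp_mono S d T_gt0).
have hjk : lpk k.+1 <= lpk j.+1 by apply: (lp_mono S d T_gt0).
have hj1T : lpk j.+1 < T by apply: le_lt_trans hjm (le_lt_trans m1 tauT).
have hjT : lpk j < T by apply: le_lt_trans (lp_le1 S d T_gt0 j) hj1T.
have step_j : `|S (lpk j.+1) - S (lpk j)| <= d.
  by rewrite (lp_step S_cont T_gt0 d_gt0 S0 hj1T).
have [Sj Sj1] := proj1 (grid_cross0 d_gt0 (lp_grid S_cont T_gt0 d_gt0 S0 hjT) step_j)
  (ltac:(by rewrite j3 j4)).
have Sjd : S (lpk j.+1) = d.
  apply/le_anti; rewrite Sj1 /=.
  by have := grid_lt d_gt0 (grid0 d) (lp_grid S_cont T_gt0 d_gt0 S0 hj1T) j4; rewrite add0r.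
exists j; split; first exact: ltn_trans j2 (lp_index_lt T_gt0 hN (le_lt_trans m1 tauT)).
have hjt : lpk j.+1 <= tau i by apply: le_trans hjm m1.
rewrite /upstep_in /upstep Sjd Sj !eqxx (le_trans hjt (le_trans (ltW h2) hti)).
by rewrite (lt_le_trans k2 hjk) (le_trans hjt (ltW h2)).
Qed.

Lemma completed_le_upsteps N M : lpk N = T -> th M = T + 1 ->
  (\sum_(0 <= i < M) ((th i.+1 <= t)%R : nat) <= \sum_(0 <= j < N) (upstep j : nat))%N.
Proof.
move=> hN hM.
apply: (@leq_trans (\sum_(0 <= i < M) \sum_(0 <= j < N) (upstep_in j i : nat))).
  apply: leq_sum_nat => i hi; case h: (th i.+1 <= t) => //=.
  have [j [hj hq]] := excursion_has_upstep hN h.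
  exact: (@sum_ge1 N (fun j => upstep_in j i) j hj hq).
rewrite exchange_big_nat; apply: leq_sum_nat => j hj; case h: (upstep j).
  by apply: (@sum_le1 M (fun i => upstep_in j i)) => i i' _ _; apply: upstep_in_unique_excursion.
by rewrite sum_eq0 // => i _; rewrite /upstep_in h.
Qed.

Lemma upsteps_le_completed N M : lpk N = T -> th M = T + 1 ->
  (\sum_(0 <= j < N) (upstep j : nat) <= 1 + \sum_(0 <= i < M) ((th i.+1 <= t)%R : nat))%N.
Proof.
move=> hN hM.
apply: (@leq_trans (\sum_(0 <= j < N) \sum_(0 <= i < M) (upstep_in j i : nat))).
  apply: leq_sum_nat => j hj; case h: (upstep j) => //=.
  have [i [hi hq]] := upstep_in_excursion hM h.
  exact: (@sum_ge1 M (fun i => upstep_in j i) i hi hq).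
rewrite exchange_big_nat.
apply: (@leq_trans (\sum_(0 <= i < M.+1) ((th i < t)%R : nat))).
  rewrite big_nat_recr //= (leq_trans _ (leq_addr _ _)) //.
  apply: leq_sum_nat => i hi; case h: (th i < t).
    by apply: (@sum_le1 N (fun j => upstep_in j i)) => j j' _ _; apply: excursion_unique_upstep.
  rewrite sum_eq0 // => j _; apply/negP => /andP[/andP[/andP[/andP[c1 _] _] q1] _].
  by move: h; rewrite (lt_le_trans q1 c1).
rewrite big_nat_recl //; apply: leq_add; first exact: leq_b1.
by apply: leq_sum_nat => i _; case h: (th i.+1 < t); rewrite //= (ltW h).
Qed.

End UpStepsAndExcursions.

(* A term of L^(pi,p)_t(S, 0) equals d^(p-1) for an up-step, is at most
   d^(p-1) for the step straddling t, and vanishes otherwise (for p > 1). *)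
Section DiscreteLocalTime.
Variables (R : realType) (S : R -> R) (T d t p : R).
Hypothesis S_cont : {within `[0, T], continuous S}.
Hypotheses (T_gt0 : 0 < T) (d_gt0 : 0 < d) (S0 : S 0 = 0) (t_le_T : t <= T).

Local Notation lpk := (lp S T d).
Local Notation th i := (exc S T d i).2.
Local Notation w := (d `^ (p - 1)).
Local Notation term := (Lterm S T p d t 0).
Local Notation straddle j := ((lpk j < t) && (t <= lpk j.+1)).

Lemma Lterm_ge0 j : 0 <= term j.
Proof. by rewrite /Lterm mulr_ge0 ?ler0n ?powR_ge0. Qed.

Lemma Lterm_after j : t <= lpk j -> term j = 0.
Proof.
move=> tj; rewrite /Lterm (min_r tj) (min_r (le_trans tj (lp_le1 S d T_gt0 j))).
by rewrite /in_oint lexx /= andbC ltNge; case: (S t <= 0); rewrite mul0r.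
Qed.

Lemma Lterm_upstep j : upstep S T d t j -> term j = w.
Proof.
move=> /andP[/andP[c1 /eqP c2] /eqP c3].
have c0 : lpk j <= t by apply: le_trans (lp_le1 S d T_gt0 j) c1.
rewrite /Lterm (min_l c0) (min_l c1) c2 c3 /in_oint (ltW d_gt0) lexx d_gt0 /=.
by rewrite mul1r subr0 ger0_norm ?ltW.
Qed.

Lemma upstep_or_straddle j : lpk j < t -> S (lpk j) = 0 ->
  0 < S (Num.min (lpk j.+1) t) -> upstep S T d t j || straddle j.
Proof.
move=> jt Sj0 Su_gt0; have [tj1|j1t] := leP t (lpk j.+1); first by rewrite jt orbT.
move: Su_gt0; rewrite (min_l (ltW j1t)) => Sj1_gt0.
have hj1T : lpk j.+1 < T by apply: lt_le_trans j1t t_le_T.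
have hjT : lpk j < T by apply: le_lt_trans (lp_le1 S d T_gt0 j) hj1T.
have Sj1 : S (lpk j.+1) = d.
  by have := lp_step S_cont T_gt0 d_gt0 S0 hj1T; rewrite Sj0 subr0 ger0_norm // ltW.
by rewrite /upstep (ltW j1t) Sj0 Sj1 !eqxx.
Qed.

Lemma Lterm_le j : 1 < p -> term j <= ((upstep S T d t j)%:R + (straddle j)%:R) * w.
Proof.
move=> hp; have w0 : 0 <= w by apply: powR_ge0.
have [tj|jt] := leP t (lpk j); first by rewrite Lterm_after // mulr_ge0 ?addr_ge0 ?ler0n.
have hjT : lpk j < T by apply: lt_le_trans jt t_le_T.
set u := Num.min (lpk j.+1) t.
have hu1 : lpk j <= u by rewrite /u le_min (lp_le1 S d T_gt0) ltW.
have hu2 : u <= lpk j.+1 by rewrite /u ge_min lexx.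
have [up down] := grid_cross0 d_gt0 (lp_grid S_cont T_gt0 d_gt0 S0 hjT)
  (lp_stay S_cont T_gt0 d_gt0 S0 hjT hu1 hu2).
rewrite /Lterm (min_l (ltW jt)) -/u /in_oint; case: ifP => _.
  case: (boolP ((S (lpk j) <= 0) && (0 < S u))) => [cross|_];
    last by rewrite mul0r mulr_ge0 ?addr_ge0 ?ler0n.
  have [g0 Su_le_d] := up cross; have /andP[_ Su_gt0] := cross.
  have pow_le : S u `^ (p - 1) <= w.
    by apply: ge0_ler_powR; rewrite // ?nnegrE ?subr_ge0 ltW.
  rewrite mul1r subr0 (ger0_norm (ltW Su_gt0)) (le_trans pow_le) //.
  rewrite -[X in X <= _]mul1r ler_wpM2r //.
  have := upstep_or_straddle jt g0 Su_gt0; rewrite jt -natrD ler1n /=.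
  by case: (upstep S T d t j); case: (t <= lpk j.+1).
case: (boolP ((S u <= 0) && (0 < S (lpk j)))) => [cross|_];
  last by rewrite mul0r mulr_ge0 ?addr_ge0 ?ler0n.
rewrite (down cross) sub0r normrN normr0 powR0 ?mulr0 ?mulr_ge0 ?addr_ge0 ?ler0n //.
by rewrite subr_eq0 gt_eqF.
Qed.

Lemma Lpn_eq N : lpk N = T -> Lpn S T p d t 0 = \sum_(0 <= j < N) term j.
Proof.
move=> hN; rewrite /Lpn; apply: lim_near_cst => //; near=> n.
have hn : (N <= n)%N by near: n; exact: nbhs_infty_ge.
rewrite (big_cat_nat _ (n := N)) //= [X in _ + X = _]big_nat_cond [X in _ + X = _]big1 ?addr0 //.
move=> j /andP[/andP[hj _] _]; apply: Lterm_after.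
by rewrite (lp_after T_gt0 hN hj).
Unshelve. all: by end_near.
Qed.

Lemma Dexc_eq M : th M = T + 1 ->
  Dexc S T d t = (\sum_(0 <= i < M) ((th i.+1 <= t)%R : nat))%:R.
Proof.
move=> hM; rewrite /Dexc; apply: lim_near_cst => //; near=> n.
have hn : (M <= n)%N by near: n; exact: nbhs_infty_ge.
rewrite natr_sum (big_cat_nat _ (n := M)) //=.
rewrite [X in _ + X = _]big_nat_cond [X in _ + X = _]big1 ?addr0 //.
move=> i /andP[/andP[hi _] _].
rewrite -[hit _ _ _ _]/(th i.+1) (th_after S_cont T_gt0 d_gt0 S0 hM (leqW hi)).
by have -> : (T + 1 <= t) = false by apply/negbTE; rewrite -ltNge; move: t_le_T; lra.
Unshelve. all: by end_near.
Qed.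

Lemma Dexc_ge0 : 0 <= Dexc S T d t.
Proof. by have [M hM] := th_fin S_cont T_gt0 d_gt0 S0; rewrite (Dexc_eq hM) ler0n. Qed.

Lemma local_time_lower : Dexc S T d t * w <= Lpn S T p d t 0.
Proof.
have [N hN] := lp_fin S_cont T_gt0 d_gt0 S0; have [M hM] := th_fin S_cont T_gt0 d_gt0 S0.
rewrite (Dexc_eq hM) (Lpn_eq hN).
apply: (@le_trans _ _ ((\sum_(0 <= j < N) (upstep S T d t j : nat))%:R * w)).
  rewrite ler_wpM2r ?powR_ge0 // ler_nat.
  exact: (completed_le_upsteps S_cont T_gt0 d_gt0 S0 t_le_T hN hM).
rewrite natr_sum big_distrl /=; apply: ler_sum => j _.
by case: (boolP (upstep S T d t j)) => [/Lterm_upstep ->|_]; rewrite ?mul1r ?mul0r ?Lterm_ge0.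
Qed.

Lemma local_time_upper : 1 < p -> Lpn S T p d t 0 <= (Dexc S T d t + 2) * w.
Proof.
move=> hp; have [N hN] := lp_fin S_cont T_gt0 d_gt0 S0; have [M hM] := th_fin S_cont T_gt0 d_gt0 S0.
rewrite (Dexc_eq hM) (Lpn_eq hN).
apply: le_trans (ler_sum _ (fun j _ => Lterm_le j hp)) _.
rewrite -big_distrl /= ler_wpM2r ?powR_ge0 // big_split /= -!natr_sum -!natrD ler_nat.
have one_straddle : (\sum_(0 <= j < N) (straddle j : nat) <= 1)%N.
  have sep a b : (a < b)%N -> straddle a -> straddle b -> False.
    move=> /(lp_mono S d T_gt0) ab /andP[_ ta] /andP[bt _].
    by move: (le_lt_trans (le_trans ta ab) bt); rewrite ltxx.
  apply: sum_le1 => j j' _ _ hj hj'.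
  by case: (ltngtP j j') => // /sep; [move/(_ hj hj') | move/(_ hj' hj)].
have := upsteps_le_completed S_cont T_gt0 d_gt0 S0 t_le_T hN hM.
by move=> /leq_add /(_ one_straddle) /leq_trans; apply; rewrite add1n addn1 addn2.
Qed.

End DiscreteLocalTime.

Lemma delta_gt0 (R : realType) n : 0 < delta R n.
Proof. by rewrite /delta invr_gt0 exprn_gt0. Qed.

Lemma delta_powRD (R : realType) (q r : R) n :
  delta R n `^ (q + r) = delta R n `^ q * delta R n `^ r.
Proof. by rewrite powRD // (gt_eqF (delta_gt0 R n)) implybT. Qed.

(* delta_n ^ q -> 0 for every q > 0: it is the geometric sequence (2^-q)^n. *)
Lemma delta_powR_cvg0 (R : realType) (q : R) : 0 < q ->
  (fun n => delta R n `^ q) @ \oo --> 0.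
Proof.
move=> q_gt0; set r := (2^-1 : R) `^ q.
have r_ge0 : 0 <= r by apply: powR_ge0.
have r_lt1 : r < 1.
  have : (2^-1 : R) `^ q < 1 `^ q.
    by apply: gt0_ltr_powR; rewrite ?nnegrE ?invr_ge0 // invf_lt1 // ltr1n.
  by rewrite powR1.
have -> : (fun n => delta R n `^ q) = (fun n => r ^+ n).
  apply/funext => n; rewrite /delta -exprVn -powR_mulrn ?invr_ge0 //.
  by rewrite -powRrM mulrC powRrM powR_mulrn.
by apply: cvg_expr; rewrite ger0_norm.
Qed.

Lemma local_time_cvg (R : realType) (S : R -> R) (T p : R) (L : R -> R -> R) t x :
  has_cont_local_time S T p L -> 0 <= t <= T ->
  (fun n => Lpn S T p (delta R n) t x) @ \oo --> L t x.
Proof.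
move=> [unif _] ht; apply/cvgrPdist_lt => e he.
have [N hN] := unif e he; near=> n; rewrite distrC; apply: hN => //.
by near: n; exact: nbhs_infty_ge.
Unshelve. all: by end_near.
Qed.

Section Asymptotics.
Variables (R : realType) (p l : R) (D Lt : nat -> R).
Hypotheses (l_gt0 : 0 < l) (D_ge0 : forall n, 0 <= D n).
Hypothesis Lt_cvg : Lt @ \oo --> l.
Hypothesis lower : forall n, D n * delta R n `^ (p - 1) <= Lt n.

Local Notation w n := (delta R n `^ (p - 1)).

(* p < 2: delta_n D_n = delta_n^(2-p) (D_n delta_n^(p-1)) <= delta_n^(2-p) Lt_n -> 0. *)
Lemma small_p_cvg : p < 2 -> (fun n => delta R n * D n) @ \oo --> 0.
Proof.
move=> p_lt2; have q_gt0 : 0 < 2 - p by rewrite subr_gt0.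
have bound : \forall n \near \oo, 0 <= delta R n * D n <= delta R n `^ (2 - p) * Lt n.
  near=> n; rewrite (mulr_ge0 (ltW (delta_gt0 R n)) (D_ge0 n)) /=.
  have split_delta : delta R n = delta R n `^ (2 - p) * w n.
    rewrite -delta_powRD (_ : 2 - p + (p - 1) = 1); last by ring.
    by rewrite powRr1 // ltW // delta_gt0.
  by rewrite {1}split_delta -mulrA (mulrC (w n)) ler_wpM2l ?powR_ge0.
apply: (squeeze_cvgr bound (cvg_cst 0)).
by rewrite -(mul0r l); apply: cvgM => //; exact: delta_powR_cvg0.
Unshelve. all: by end_near.
Qed.

Lemma scaled_count_cvg : 1 < p -> (forall n, Lt n <= (D n + 2) * w n) ->
  (fun n => D n * w n) @ \oo --> l.
Proof.
move=> p_gt1 upper.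
have bound : \forall n \near \oo, Lt n - 2 * w n <= D n * w n <= Lt n.
  by near=> n; rewrite lower andbT lerBlDr -mulrDl upper.
apply: (squeeze_cvgr bound _ Lt_cvg).
rewrite -[l]subr0 -(mulr0 2); apply: cvgB => //; apply: cvgM; first exact: cvg_cst.
by apply: delta_powR_cvg0; rewrite subr_gt0.
Unshelve. all: by end_near.
Qed.

Section LimitKnown.
Hypothesis Dw_cvg : (fun n => D n * w n) @ \oo --> l.

(* p > 2: delta_n D_n = (D_n delta_n^(p-1)) / delta_n^(p-2) blows up, since
   the numerator is eventually >= l/2 and the denominator tends to 0. *)
Lemma large_p_cvgy : 2 < p -> (fun n => delta R n * D n) @ \oo --> +oo.
Proof.
move=> p_gt2; apply/cvgryPge => A; set c := `|A| + 1.
have c_gt0 : 0 < c by rewrite ltr_wpDl.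
have b_cvg := delta_powR_cvg0 (ltac:(by rewrite subr_gt0) : 0 < p - 2).
near=> n.
have b_small : delta R n `^ (p - 2) <= l / (2 * c).
  by near: n; apply: cvgr_le b_cvg _ _; rewrite divr_gt0 ?mulr_gt0.
have Dw_large : l / 2 <= D n * w n.
  by near: n; apply: cvgr_ge Dw_cvg _ _; rewrite ltr_pdivrMr ?ltr_pMr ?ltr1n.
set b := delta R n `^ (p - 2) in b_small *.
have b_gt0 : 0 < b by apply: powR_gt0; exact: delta_gt0.
have w_eq : w n = b * delta R n.
  rewrite -[X in _ * X](powRr1 (ltW (delta_gt0 R n))) /b -delta_powRD.
  by congr (_ `^ _); ring.
rewrite w_eq in Dw_large; move: b_small; rewrite ler_pdivlMr ?mulr_gt0 // => b_small.
have : c * b <= delta R n * D n * b.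
  by rewrite (_ : delta R n * D n * b = D n * (b * delta R n)); [nra | ring].
rewrite ler_pM2r // => c_le.
by apply: le_trans (ler_norm A) _; apply: le_trans c_le; rewrite /c lerDl ler01.
Unshelve. all: by end_near.
Qed.

Lemma large_p_ratio : (fun n => D n / (l / w n)) @ \oo --> (1 : R).
Proof.
have -> : (fun n => D n / (l / w n)) = (fun n => D n * w n * l^-1).
  by apply/funext => n; rewrite invfM invrK mulrCA mulrC.
by rewrite -[X in _ --> X](divff (lt0r_neq0 l_gt0)); exact: (cvgMr_tmp (b := l^-1) Dw_cvg).
Qed.

Lemma p_two_cvg : p = 2 -> (fun n => delta R n * D n) @ \oo --> l.
Proof.
move=> p2; rewrite (_ : (fun n => delta R n * D n) = (fun n => D n * w n)) //.
apply/funext => n; rewrite mulrC p2 (_ : 2 - 1 = 1 :> R); last by ring.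
by rewrite powRr1 // ltW // delta_gt0.
Qed.

End LimitKnown.
End Asymptotics.

Theorem mainTheorem6 (R : realType) (p T : R) (S : R -> R) (L : R -> R -> R) :
  1 <= p -> 0 < T ->
  {within `[0, T], continuous S} -> S 0 = 0 ->
  has_cont_local_time S T p L ->
  (forall t, 0 < t <= T -> 0 < L t 0) ->
  forall t : R, 0 < t <= T ->
  [/\ (p < 2 -> (fun n => delta R n * Dexc S T (delta R n) t) @ \oo --> 0),
      (2 < p -> (fun n => delta R n * Dexc S T (delta R n) t) @ \oo --> +oo /\
                (fun n => Dexc S T (delta R n) t / (L t 0 / delta R n `^ (p - 1)))
                  @ \oo --> (1 : R))
    & (p = 2 -> (fun n => delta R n * Dexc S T (delta R n) t) @ \oo --> L t 0)].
Proof.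
move=> _ T_gt0 S_cont S0 hL L_pos t /andP[t_gt0 t_le_T].
pose D n := Dexc S T (delta R n) t.
pose Lt n := Lpn S T p (delta R n) t 0.
have l_gt0 : 0 < L t 0 by apply: L_pos; rewrite t_gt0.
have D_ge0 n : 0 <= D n := Dexc_ge0 S_cont T_gt0 (delta_gt0 R n) S0 t_le_T.
have Lt_cvg : Lt @ \oo --> L t 0 by apply: local_time_cvg hL _; rewrite (ltW t_gt0).
have lower n : D n * delta R n `^ (p - 1) <= Lt n.
  exact: (local_time_lower p S_cont T_gt0 (delta_gt0 R n) S0 t_le_T).
have Dw_cvg (p_gt1 : 1 < p) := scaled_count_cvg Lt_cvg lower p_gt1
  (fun n => local_time_upper S_cont T_gt0 (delta_gt0 R n) S0 t_le_T p_gt1).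
split => [p_lt2|p_gt2|p2].
- exact: (small_p_cvg D_ge0 Lt_cvg lower p_lt2).
- have p_gt1 : 1 < p by apply: lt_trans p_gt2; rewrite ltr1n.
  have Dw := Dw_cvg p_gt1.
  by split; [exact: (large_p_cvgy l_gt0 Dw p_gt2) | exact: (large_p_ratio l_gt0 Dw)].
- by apply: (p_two_cvg _ p2); apply: Dw_cvg; rewrite p2 ltr1n.
Qed.
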